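(* There exists a constant $C_0>0$, independent of $P$, $T$ and $\Delta$ (it may depend on $\lambda_1,\lambda_2$), such that for all $P>0$, $\Delta>0$, $T\in\mathbb{N}$, the quantizer $q_r$ satisfies $$\mathbb{E}[r_{\rm loss}]\le \log_2\Big(1+C_0\,P\,\max\{e^{-T\Delta/\lambda_1},\Delta\}\Big).$$
   Context: $H_1,H_2$ are independent exponential random variables with means $\lambda_1\ge\lambda_2>0$ (density $e^{-x/\lambda_i}/\lambda_i$, $x>0$); $P>0$ is the total power. For $a\ge b\ge0$ with $a>0$ let $A(a,b)=\frac{2b}{\sqrt{(a+b)^2+4ab^2P}+a+b}$. Full-CSI maximum minimum rate: $r_{\max}=\log_2(1+PH_1A(H_1,H_2))$ if $H_1\ge H_2$ and $r_{\max}=\log_2(1+PH_2A(H_2,H_1))$ if $H_1<H_2$. Quantizer: $q_r(x)=\lfloor x/\Delta\rfloor\Delta$ for $x\le T\Delta$, $q_r(x)=T\Delta$ for $x>T\Delta$. Let $a_i=q_r(H_i)$; if $a_1\ge a_2$ let $(s,w)=(1,2)$, otherwise $(s,w)=(2,1)$. Power fraction for the stronger receiver's message: $\alpha_q=A(a_s,a_w)$ if $a_1,a_2>0$, else $\alpha_q=0$. Adapted rates: $r_{s,q}=\log_2(1+P\alpha_qa_s)$, $r_{w,q}=\log_2\big(1+\frac{Pa_w(1-\alpha_q)}{Pa_w\alpha_q+1}\big)$. Rate loss: $r_{\rm loss}=r_{\max}-\min\{r_{1,q},r_{2,q}\}$. *)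

From HB Require Import structures.
From mathcomp Require Import all_boot all_order all_algebra.
From mathcomp Require Import all_classical all_reals all_analysis.
Set Implicit Arguments. Unset Strict Implicit. Unset Printing Implicit Defensive.
Import Order.TTheory GRing.Theory Num.Theory.
Local Open Scope ring_scope.

Section Defs.
Variable R : realType.

Definition log2 (x : R) : R := ln x / ln 2.

Definition Afrac (P a b : R) : R :=
  2 * b / (Num.sqrt ((a + b) ^+ 2 + 4 * a * b ^+ 2 * P) + a + b).

Definition rmax (P h1 h2 : R) : R :=
  if h2 <= h1 then log2 (1 + P * h1 * Afrac P h1 h2)
  else log2 (1 + P * h2 * Afrac P h2 h1).

Definition qr (Delta : R) (T : nat) (x : R) : R :=
  if x <= T%:R * Delta then (Num.floor (x / Delta))%:~R * Delta
  else T%:R * Delta.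

Definition rmin_q (P Delta : R) (T : nat) (h1 h2 : R) : R :=
  let a1 := qr Delta T h1 in
  let a2 := qr Delta T h2 in
  let a_s := if a2 <= a1 then a1 else a2 in
  let a_w := if a2 <= a1 then a2 else a1 in
  let alpha := if (0 < a1) && (0 < a2) then Afrac P a_s a_w else 0 in
  let r_s := log2 (1 + P * alpha * a_s) in
  let r_w := log2 (1 + P * a_w * (1 - alpha) / (P * a_w * alpha + 1)) in
  Num.min r_s r_w.

Definition rloss (P Delta : R) (T : nat) (h1 h2 : R) : R :=
  rmax P h1 h2 - rmin_q P Delta T h1 h2.

Definition exp_density (lam x : R) : R := expR (- x / lam) / lam.

(* E[rloss(H1,H2)] for independent exponentials H1, H2 with means lam1, lam2:
   Lebesgue integral w.r.t. the joint law (density on (0,oo)^2) *)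
Definition expected_rloss (lam1 lam2 P Delta : R) (T : nat) : \bar R :=
  (\int[(@lebesgue_measure R) \x (@lebesgue_measure R)]_(z in
      [set z : R * R | (0 < z.1)%R /\ (0 < z.2)%R])
    (rloss P Delta T z.1 z.2 * exp_density lam1 z.1 * exp_density lam2 z.2)%:E)%E.

End Defs.

(* With the power split that equalises the two rates, both rates are
   [log2 (1 + s)], where [s] solves [s a + s b + s^2 b = P a b] for the stronger
   gain [a] and the weaker gain [b].  Lowering the gains by a total of [L] lowers
   the root to some [t] with [1 + s <= (1 + t) (1 + P L)], so the rate loss is at
   most [log2 (1 + P L)].  The quantiser errs by less than [Delta] below
   [T Delta] and by [x - T Delta] above it, so
   [L <= 2 Delta + (H1 - T Delta)^+ + (H2 - T Delta)^+].  Bounding the concave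
   [log2 (1 + .)] by its tangent at [a = C0 P max (exp (- T Delta / lam1), Delta)]
   reduces the claim to [E (H - c)^+ <= 4 lam exp (- c / lam)] for an exponential
   [H] of mean [lam]; as [lam exp (- c / lam)] increases with [lam],
   [C0 = 2 + 8 lam1] works. *)

From HB Require Import structures.
From mathcomp Require Import all_boot all_order all_algebra.
From mathcomp Require Import all_classical all_reals all_analysis.
From mathcomp Require Import ring lra measurable_realfun.
Import Order.TTheory GRing.Theory Num.Theory.
Import numFieldTopology.Exports.
Local Open Scope classical_set_scope.
Local Open Scope ring_scope.

Section rates.
Context {R : realType}.
Implicit Types (P a b s t u L h Delta : R) (T : nat).

(* With power fraction [alpha = s / (P a)], [s] is the strong receiver's SINR,
   and the weak one's, [P b (1 - alpha) / (P b alpha + 1)], equals [s] exactly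
   when this holds. *)
Definition balanced_snr P a b s := s * a + s * b + s ^+ 2 * b = P * a * b.

Definition eq_snr P a b :=
  P * Num.max a b * Afrac P (Num.max a b) (Num.min a b).

Lemma Afrac_ge0 {P a b} : 0 < P -> 0 < a -> 0 <= b -> 0 <= Afrac P a b.
Proof.
move=> P0 a0 b0; rewrite /Afrac; apply: divr_ge0; first lra.
by have := sqrtr_ge0 ((a + b) ^+ 2 + 4 * a * b ^+ 2 * P); lra.
Qed.

Lemma Afrac0 P a : Afrac P a 0 = 0.
Proof. by rewrite /Afrac mulr0 mul0r. Qed.

Lemma Afrac_root {P a b} : 0 < P -> 0 < a -> 0 <= b ->
  P * a * b * Afrac P a b ^+ 2 + (a + b) * Afrac P a b = b.
Proof.
move=> P0 a0 b0; set Q := (a + b) ^+ 2 + 4 * a * b ^+ 2 * P.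
have Q0 : 0 <= Q.
  by rewrite addr_ge0 ?sqr_ge0 // mulr_ge0 ?(ltW P0) // mulr_ge0 ?sqr_ge0 //; lra.
set D := Num.sqrt Q; have D0 : 0 <= D := sqrtr_ge0 Q.
have DQ : D ^+ 2 = Q by rewrite sqr_sqrtr.
set S := D + a + b; have S0 : S != 0 by rewrite gt_eqF // /S; lra.
have -> : P * a * b * (2 * b / S) ^+ 2 + (a + b) * (2 * b / S) =
          (4 * P * a * b ^+ 3 + 2 * b * (a + b) * S) / S ^+ 2 by field.
apply/(canLR (mulfK (expf_neq0 2 S0)))/eqP; rewrite -subr_eq0.
have -> : 4 * P * a * b ^+ 3 + 2 * b * (a + b) * S - b * S ^+ 2 = b * (Q - D ^+ 2).
  by rewrite /S /Q; ring.
by rewrite DQ subrr mulr0.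
Qed.

Lemma balanced_snr_Afrac P a b : 0 < P -> 0 < a -> 0 <= b ->
  balanced_snr P a b (P * a * Afrac P a b).
Proof.
move=> P0 a0 b0; rewrite /balanced_snr -[in RHS](Afrac_root P0 a0 b0); ring.
Qed.

Lemma weak_snr_Afrac P a b : 0 < P -> 0 < a -> 0 < b ->
  P * b * (1 - Afrac P a b) / (P * b * Afrac P a b + 1) = P * a * Afrac P a b.
Proof.
move=> P0 a0 b0; have := Afrac_root P0 a0 (ltW b0).
have := Afrac_ge0 P0 a0 (ltW b0); set A := Afrac P a b => A0 root.
have D0 : P * b * A + 1 != 0.
  by rewrite gt_eqF //; have := mulr_ge0 (mulr_ge0 (ltW P0) (ltW b0)) A0; lra.
apply: (canLR (mulfK D0)); apply/eqP; rewrite -subr_eq0; apply/eqP.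
transitivity (P * (b - (P * a * b * A ^+ 2 + (a + b) * A))); first by ring.
by rewrite root subrr mulr0.
Qed.

Lemma eq_snr_min0 P a b : Num.min a b = 0 -> eq_snr P a b = 0.
Proof. by rewrite /eq_snr => ->; rewrite Afrac0 mulr0. Qed.

Lemma balanced_eq_snr {P a b} : 0 < P -> 0 < Num.min a b ->
  balanced_snr P (Num.max a b) (Num.min a b) (eq_snr P a b).
Proof.
move=> P0 m0; apply: balanced_snr_Afrac => //; last exact: ltW.
by apply: lt_le_trans m0 _; rewrite ge_min le_max lexx.
Qed.

Lemma eq_snr_ge0 {P a b} : 0 < P -> 0 <= a -> 0 <= b -> 0 <= eq_snr P a b.
Proof.
move=> P0 a0 b0; have [m0|] := ltP 0 (Num.min a b); last first.
  by move=> m0; rewrite eq_snr_min0 //; apply/le_anti; rewrite m0 le_min a0.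
have M0 : 0 < Num.max a b by apply: lt_le_trans m0 _; rewrite ge_min le_max lexx.
by apply: mulr_ge0; [nra | exact: Afrac_ge0 (ltW m0)].
Qed.

Lemma rmaxE P h1 h2 : rmax P h1 h2 = log2 (1 + eq_snr P h1 h2).
Proof. by rewrite /rmax /eq_snr; case: leP. Qed.

(* A zero quantised gain forces [alpha = 0] and both adapted rates to [0], in
   agreement with [eq_snr] since [Afrac P a 0 = 0]. *)
Lemma rmin_qE P Delta T h1 h2 : 0 < P ->
  0 <= qr Delta T h1 -> 0 <= qr Delta T h2 ->
  rmin_q P Delta T h1 h2 = log2 (1 + eq_snr P (qr Delta T h1) (qr Delta T h2)).
Proof.
move=> P0; rewrite /rmin_q /eq_snr.
move: (qr Delta T h1) (qr Delta T h2) => a1 a2 a10 a20 /=.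
have [a21 | /ltW a12] := leP a2 a1; case: ifPn => [/andP[a1p a2p] | pos].
- by rewrite weak_snr_Afrac // mulrAC minxx.
- have -> : a2 = 0 by move: pos; rewrite negb_and -!leNgt; case/orP; lra.
  by rewrite Afrac0 !(mulr0, mul0r, addr0, subr0, invr1, minxx).
- by rewrite weak_snr_Afrac // mulrAC minxx.
- have -> : a1 = 0 by move: pos; rewrite negb_and -!leNgt; case/orP; lra.
  by rewrite Afrac0 !(mulr0, mul0r, addr0, subr0, invr1, minxx).
Qed.

Lemma balanced_snr_le_weak {P a b s} : 0 < a -> 0 <= b -> 0 <= s ->
  balanced_snr P a b s -> s <= P * b.
Proof.
rewrite /balanced_snr => a0 b0 s0 Bs; rewrite -(ler_pM2r a0).
have : 0 <= s * b + s ^+ 2 * b by rewrite addr_ge0 ?mulr_ge0 ?sqr_ge0.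
have -> : P * b * a = P * a * b by ring.
lra.
Qed.

Lemma balanced_snr_le_strong {P a b s} : 0 <= a -> 0 < b -> 0 <= s ->
  balanced_snr P a b s -> s * (1 + s) <= P * a.
Proof.
rewrite /balanced_snr => a0 b0 s0 Bs; rewrite -(ler_pM2r b0).
have : 0 <= s * a by exact: mulr_ge0.
have -> : s * (1 + s) * b = s * b + s ^+ 2 * b by ring.
lra.
Qed.

Lemma balanced_snr_le {P a b s u} : 0 < a -> 0 < b -> 0 <= u ->
  balanced_snr P a b s -> P * a * b <= u * a + u * b + u ^+ 2 * b -> s <= u.
Proof.
rewrite /balanced_snr => a0 b0 u0 <- Bu; rewrite leNgt; apply/negP => us.
have : u ^+ 2 * b <= s ^+ 2 * b.
  by rewrite ler_pM2r // ler_sqr ?nnegrE; lra.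
have : u * a < s * a by rewrite ltr_pM2r.
have : u * b < s * b by rewrite ltr_pM2r.
lra.
Qed.

Lemma balanced_snr_perturb P (hs hw qs qw : R) L s t :
  0 < P -> 0 < hs -> 0 < hw -> 0 < qs -> 0 < qw -> 0 <= L ->
  hs <= qs + L -> hw <= qw + L -> 0 <= t ->
  balanced_snr P hs hw s -> balanced_snr P qs qw t -> s <= t + P * L * (1 + t).
Proof.
move=> P0 hs0 hw0 qs0 qw0 L0 hsL hwL t0 Bs Bt; set u := t + P * L * (1 + t).
have PL0 : 0 <= P * L by exact: mulr_ge0 (ltW P0) L0.
have tu : t <= u by rewrite /u; have := mulr_ge0 PL0 (addr_ge0 ler01 t0); lra.
have tw := balanced_snr_le_weak qs0 (ltW qw0) t0 Bt.
have ts := balanced_snr_le_strong (ltW qs0) qw0 t0 Bt.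
have weak : t * hw <= u * qw.
  have : t * L <= P * qw * (1 + t) * L by apply: ler_wpM2r => //; nra.
  have : t * hw <= t * (qw + L) by exact: ler_wpM2l.
  rewrite /u; lra.
have strong : t * (1 + t) * hs <= u * (1 + u) * qs.
  have grow : t * (1 + t) + P * L <= u * (1 + u).
    have -> : u * (1 + u) = t * (1 + t) + P * L * ((1 + t) * (1 + u + t)).
      by rewrite /u; ring.
    by rewrite lerD2l ler_peMr //; nra.
  have := ler_wpM2r (ltW qs0) grow.
  have : t * (1 + t) * L <= P * qs * L by exact: ler_wpM2r.
  have : t * (1 + t) * hs <= t * (1 + t) * (qs + L) by apply: ler_wpM2l; nra.
  lra.
apply: balanced_snr_le Bs _ => //; first lra.
have qq : 0 < qs * qw by exact: mulr_gt0.
rewrite -(ler_pM2l qq).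
have -> : qs * qw * (P * hs * hw) = qs * hs * (t * hw) + qw * hw * (t * (1 + t) * hs).
  by transitivity (P * qs * qw * hs * hw); [ring | rewrite -Bt; ring].
have -> : qs * qw * (u * hs + u * hw + u ^+ 2 * hw) =
          qs * hs * (u * qw) + qw * hw * (u * (1 + u) * qs) by ring.
by apply: lerD; apply: ler_wpM2l => //; apply: mulr_ge0; exact: ltW.
Qed.

Lemma eq_snr_perturb {P h1 h2 a1 a2 : R} : 0 < P -> 0 < h1 -> 0 < h2 ->
  0 <= a1 <= h1 -> 0 <= a2 <= h2 ->
  eq_snr P h1 h2 <= eq_snr P a1 a2
    + P * ((h1 - a1) + (h2 - a2)) * (1 + eq_snr P a1 a2).
Proof.
move=> P0 h10 h20 /andP[a10 a1h] /andP[a20 a2h].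
set L := (h1 - a1) + (h2 - a2); set t := eq_snr P a1 a2.
have mh0 : 0 < Num.min h1 h2 by rewrite lt_min h10.
have Mh0 : 0 < Num.max h1 h2 by rewrite lt_max h10.
have [Mh mh] : Num.max h1 h2 <= Num.max a1 a2 + L /\ Num.min h1 h2 <= Num.min a1 a2 + L.
  by rewrite /L; case: (leP h1 h2); case: (leP a1 a2); split; lra.
have Bs := balanced_eq_snr P0 mh0.
have [ma0 | ma0] := ltP 0 (Num.min a1 a2).
  have Ma0 : 0 < Num.max a1 a2 by apply: lt_le_trans ma0 _; rewrite ge_min le_max lexx.
  apply: balanced_snr_perturb Bs (balanced_eq_snr P0 ma0) => //.
    by rewrite /L; lra.
  exact: eq_snr_ge0.
have ma : Num.min a1 a2 = 0 by apply/le_anti; rewrite ma0 le_min a10.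
rewrite /t (eq_snr_min0 P a1 a2 ma) add0r addr0 mulr1.
apply: le_trans (balanced_snr_le_weak Mh0 (ltW mh0) _ Bs) _.
  exact: eq_snr_ge0 (ltW h10) (ltW h20).
by rewrite ler_pM2l // -[L]add0r -ma.
Qed.

Lemma ler_log2 u v : 0 < u -> u <= v -> log2 u <= log2 v.
Proof.
move=> u0 uv; have l2 : 0 < ln (2 : R) by rewrite ln_gt0 // ltr1n.
by rewrite /log2 ler_pM2r ?invr_gt0 // ler_ln ?posrE //; exact: lt_le_trans uv.
Qed.

Lemma log2M u v : 0 < u -> 0 < v -> log2 (u * v) = log2 u + log2 v.
Proof. by move=> u0 v0; rewrite /log2 lnM ?posrE // mulrDl. Qed.

Lemma rate_loss_le {P h1 h2 a1 a2 : R} : 0 < P -> 0 < h1 -> 0 < h2 ->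
  0 <= a1 <= h1 -> 0 <= a2 <= h2 ->
  log2 (1 + eq_snr P h1 h2) - log2 (1 + eq_snr P a1 a2)
    <= log2 (1 + P * ((h1 - a1) + (h2 - a2))).
Proof.
move=> P0 h10 h20 a1b a2b; have st := eq_snr_perturb P0 h10 h20 a1b a2b.
case/andP: a1b => a10 a1h; case/andP: a2b => a20 a2h.
have t0 := eq_snr_ge0 P0 a10 a20; have s0 := eq_snr_ge0 P0 (ltW h10) (ltW h20).
have L0 : 0 <= P * ((h1 - a1) + (h2 - a2)) by apply: mulr_ge0; lra.
rewrite lerBlDl -log2M; [apply: ler_log2 | lra | lra]; first lra.
move: st; set t := eq_snr P a1 a2; set PL := P * _.
have -> : (1 + t) * (1 + PL) = 1 + (t + PL * (1 + t)) by ring.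
by rewrite lerD2l.
Qed.

Lemma qr_ge0 Delta T h : 0 < Delta -> 0 <= h -> 0 <= qr Delta T h.
Proof.
move=> D0 h0; rewrite /qr; case: ifP => _; apply: mulr_ge0 => //; try exact: ltW.
by rewrite ler0z floor_ge0 divr_ge0 // ltW.
Qed.

Lemma qr_le Delta T h : 0 < Delta -> qr Delta T h <= h.
Proof.
move=> D0; rewrite /qr; case: ifPn => [_ | ]; last by rewrite -ltNge => /ltW.
by rewrite -ler_pdivlMr // floor_le.
Qed.

Lemma qr_err Delta T h : 0 < Delta ->
  h - qr Delta T h <= Delta + Num.max (h - T%:R * Delta) 0.
Proof.
move=> D0; have m0 : 0 <= Num.max (h - T%:R * Delta) 0 by rewrite le_max lexx orbT.
have m1 : h - T%:R * Delta <= Num.max (h - T%:R * Delta) 0 by rewrite le_max lexx.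
rewrite /qr; case: ifP => _; last lra.
have := floorD1_gt (h / Delta); rewrite intrD ltr_pdivrMr // mulrDl mul1r.
lra.
Qed.

Lemma rloss_le_log2_excess P Delta T h1 h2 : 0 < P -> 0 < Delta ->
  0 < h1 -> 0 < h2 ->
  rloss P Delta T h1 h2 <= log2 (1 + P * (2 * Delta
    + Num.max (h1 - T%:R * Delta) 0 + Num.max (h2 - T%:R * Delta) 0)).
Proof.
move=> P0 D0 h10 h20.
have q1 : 0 <= qr Delta T h1 <= h1 by rewrite qr_ge0 ?qr_le // ltW.
have q2 : 0 <= qr Delta T h2 <= h2 by rewrite qr_ge0 ?qr_le // ltW.
rewrite /rloss rmaxE rmin_qE //; [|by case/andP: q1|by case/andP: q2].
apply: le_trans (rate_loss_le P0 h10 h20 q1 q2) _; apply: ler_log2.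
  by case/andP: q1; case/andP: q2; nra.
have := qr_err Delta T h1 D0; have := qr_err Delta T h2 D0; rewrite lerD2l; nra.
Qed.

Lemma log2_1D_tangent a y : 0 <= a -> 0 <= y ->
  log2 (1 + y) <= log2 (1 + a) + (y - a) / ((1 + a) * ln 2).
Proof.
move=> a0 y0; have l2 : 0 < ln (2 : R) by rewrite ln_gt0 // ltr1n.
have Pa : 1 + a \in Num.pos by rewrite posrE; lra.
have Py : 1 + y \in Num.pos by rewrite posrE; lra.
rewrite /log2 invfM mulrA -mulrDl ler_pM2r ?invr_gt0 // -lerBlDl -ln_div //.
have -> : (1 + y) / (1 + a) = 1 + (y - a) / (1 + a) by field; lra.
apply: le_ln1Dx.
have -> : (y - a) / (1 + a) = (1 + y) / (1 + a) - 1 by field; lra.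
have : 0 < (1 + y) / (1 + a) by apply: divr_gt0; lra.
lra.
Qed.

Lemma mul_expRNdiv_le (l1 l2 c : R) : 0 < l2 -> l2 <= l1 -> 0 <= c ->
  l2 * expR (- c / l2) <= l1 * expR (- c / l1).
Proof.
move=> l20 l21 c0; apply: ler_pM; [exact: ltW | exact: expR_ge0 | exact: l21 |].
rewrite ler_expR !mulNr lerN2 ler_wpM2l // lef_pV2 ?posrE //.
exact: lt_le_trans l21.
Qed.

Lemma rloss_le_tangent P Delta T a h1 h2 : 0 < P -> 0 < Delta -> 0 <= a ->
  0 < h1 -> 0 < h2 ->
  rloss P Delta T h1 h2 <= log2 (1 + a) + (P * (2 * Delta
    + Num.max (h1 - T%:R * Delta) 0 + Num.max (h2 - T%:R * Delta) 0) - a)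
    / ((1 + a) * ln 2).
Proof.
move=> P0 D0 a0 h10 h20.
apply: le_trans (rloss_le_log2_excess P Delta T h1 h2 P0 D0 h10 h20) _.
apply: log2_1D_tangent => //; apply: mulr_ge0; first exact: ltW.
by rewrite !addr_ge0 ?le_max ?lexx ?orbT //; lra.
Qed.

Lemma mean_quantization_error_le (lam1 lam2 c Delta : R) :
  0 < lam2 -> lam2 <= lam1 -> 0 <= c ->
  2 * Delta + (4 * lam1 * expR (- c / lam1) + 4 * lam2 * expR (- c / lam2))
    <= (2 + 8 * lam1) * Num.max (expR (- c / lam1)) Delta.
Proof.
move=> l20 l21 c0; have l10 := lt_le_trans l20 l21.
have [Dm em] : Delta <= Num.max (expR (- c / lam1)) Delta
    /\ expR (- c / lam1) <= Num.max (expR (- c / lam1)) Delta.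
  by rewrite !le_max !lexx orbT.
have := mul_expRNdiv_le lam1 lam2 c l20 l21 c0.
by have := ler_wpM2l (ltW l10) em; lra.
Qed.

End rates.

Section integral_majorant.
Context {d} {T : measurableType d} {R : realType} (mu : {measure set T -> \bar R}).

(* No measurability of [f] is needed, which spares proving [rloss] measurable. *)
Lemma le_integral_ge0_majorant (D : set T) (f g : T -> \bar R) :
  (forall x, D x -> 0 <= g x)%E -> (forall x, D x -> f x <= g x)%E ->
  (\int[mu]_(x in D) f x <= \int[mu]_(x in D) g x)%E.
Proof.
move=> g0 fg; rewrite (integralE _ D f).
have fneg0 : (0 <= \int[mu]_(x in D) f^\- x)%E.
  by apply: integral_ge0 => x _; exact: funeneg_ge0.
apply: le_trans (_ : (\int[mu]_(x in D) f^\+ x - 0 <= _)%E); first exact: leeB.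
rewrite sube0 ge0_integralE; last by move=> x _; exact: funepos_ge0.
rewrite ge0_integralE //; apply: ereal_sup_le => _ [h hle <-]; exists h => //= x.
apply: le_trans (hle x) _; rewrite !patchE; case: ifPn => // /set_mem Dx.
by rewrite funeposE ge_max fg // g0.
Qed.

End integral_majorant.

Section tensor_integral.
Context {d1 d2} {T1 : measurableType d1} {T2 : measurableType d2} {R : realType}.
Variables (m1 : {sigma_finite_measure set T1 -> \bar R})
  (m2 : {sigma_finite_measure set T2 -> \bar R}).

Lemma measurable_tensor (k : R) (f : T1 -> R) (g : T2 -> R) :
  measurable_fun setT f -> measurable_fun setT g ->
  measurable_fun setT (fun z : T1 * T2 => k * f z.1 * g z.2).
Proof.
move=> mf mg; apply: measurable_funM; first apply: measurable_funM.
- exact: measurable_cst.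
- exact: measurableT_comp mf measurable_fst.
- exact: measurableT_comp mg measurable_snd.
Qed.

Lemma integral_tensor {k If Ig : R} {f : T1 -> R} {g : T2 -> R} :
  measurable_fun setT f -> measurable_fun setT g ->
  (forall x, 0 <= f x) -> (forall y, 0 <= g y) -> 0 <= k ->
  (\int[m1]_x (f x)%:E = If%:E)%E -> (\int[m2]_y (g y)%:E = Ig%:E)%E ->
  (\int[m1 \x m2]_z (k * f z.1 * g z.2)%:E = (k * If * Ig)%:E)%E.
Proof.
move=> mf mg f0 g0 k0 intf intg.
have Ig0 : 0 <= Ig.
  by rewrite -lee_fin -intg; apply: integral_ge0 => y _; rewrite lee_fin.
have kf0 x : 0 <= k * f x by exact: mulr_ge0.
have mkf : measurable_fun setT (fun x => k * f x).
  by apply: measurable_funM => //; exact: measurable_cst.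
rewrite fubini_tonelli1 //; last 2 first.
- by apply/measurable_EFinP; exact: measurable_tensor.
- by move=> z; rewrite lee_fin mulr_ge0.
rewrite /fubini_F /=.
transitivity (\int[m1]_x ((k * f x)%:E * Ig%:E))%E.
  apply: eq_integral => x _; under eq_integral do rewrite EFinM.
  rewrite ge0_integralZl_EFin ?intg //; last exact/measurable_EFinP.
  by move=> y _; rewrite lee_fin.
rewrite ge0_integralZr //; last 2 first.
- exact/measurable_EFinP.
- by move=> x _; rewrite lee_fin.
under eq_integral do rewrite EFinM.
rewrite ge0_integralZl_EFin ?intf -?EFinM //; last exact/measurable_EFinP.
by move=> x _; rewrite lee_fin.
Qed.

End tensor_integral.

Section exponential_tail.
Context {R : realType}.
Notation mu := (@lebesgue_measure R).

Definition exponential_tail_pdf (r c : R) := exponential_pdf r \_ `[c, +oo[%classic.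

Lemma exponential_tail_pdf_ge0 (r c x : R) : 0 <= r ->
  0 <= exponential_tail_pdf r c x.
Proof.
move=> r0; rewrite /exponential_tail_pdf patchE.
by case: ifPn => // _; exact: exponential_pdf_ge0.
Qed.

Lemma measurable_exponential_tail_pdf (r c : R) :
  measurable_fun setT (exponential_tail_pdf r c).
Proof.
rewrite /exponential_tail_pdf.
apply/(measurable_restrictT _ _).1; first exact: measurable_itv.
exact: measurable_funTS (measurable_exponential_pdf r).
Qed.

Lemma integral_exponential_tail_pdf (r c : R) : 0 < r -> 0 <= c ->
  (\int[mu]_x (exponential_tail_pdf r c x)%:E = (expR (- r * c))%:E)%E.
Proof.
move=> r0 c0.
have -> : (fun x => (exponential_tail_pdf r c x)%:E)
          = (EFin \o exponential_pdf r) \_ `[c, +oo[%classic by rewrite restrict_EFin.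
rewrite -integral_mkcond.
have cexpNM : continuous (fun z : R^o => expR (- r * z)).
  move=> z; apply: continuous_comp; last exact: continuous_expR.
  by apply: continuousM => //; apply: (@continuousN _ R^o); exact: cst_continuous.
rewrite (@ge0_continuous_FTC2y _ _ (fun x => - expR (- r * x)) _ 0) //.
- by rewrite EFinN oppeK add0e.
- by move=> x _; apply: exponential_pdf_ge0; exact: ltW.
- apply: continuous_subspaceW; last exact: within_continuous_exponential_pdf.
  by move=> x /=; rewrite !in_itv /= !andbT => /(le_trans c0).
- rewrite -oppr0; apply: cvgN.
  rewrite (_ : (fun x => expR (- r * x)) = (fun z => expR (- z)) \o ( *%R r)).
    apply: (@cvg_comp _ _ _ _ _ _ (pinfty_nbhs R)); last exact: cvgr_expR.
    exact: gt0_cvgMry.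
  by apply: eq_fun => x; rewrite mulNr.
- by apply: cvgN; apply/cvg_at_right_filter; exact: cexpNM.
- move=> x; rewrite in_itv /= andbT => cx; apply: derive1_exponential_pdf.
  by rewrite in_itv /= andbT; exact: le_lt_trans cx.
Qed.

Lemma exp_densityE (lam x : R) : 0 < lam -> 0 <= x ->
  exp_density lam x = exponential_pdf lam^-1 x.
Proof.
move=> lam0 x0; rewrite exponential_pdfE // /exp_density mulrC.
by congr (_ * expR _); ring.
Qed.

Lemma mul_expRNhalf_le2 (y : R) : y * expR (- (y / 2)) <= 2.
Proof.
rewrite -(ler_pM2r (expR_gt0 (y / 2))) -mulrA -expRD addNr expR0 mulr1.
by have := expR_ge1Dx (y / 2); lra.
Qed.

(* [y <= 2 e^(y/2)] with [y = (x - c) / lam] trades the factor [x - c] for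
   halving the rate of the exponential density. *)
Lemma excess_exp_density_le (lam c x : R) : 0 < lam -> 0 <= c ->
  Num.max (x - c) 0 * exp_density lam x
    <= 4 * lam * expR (- (2 * lam)^-1 * c) * exponential_tail_pdf (2 * lam)^-1 c x.
Proof.
move=> lam0 c0; have r0 : 0 <= (2 * lam)^-1 by rewrite invr_ge0; lra.
have K0 : 0 <= 4 * lam * expR (- (2 * lam)^-1 * c).
  by rewrite mulr_ge0 ?expR_ge0 //; lra.
have [xc | cx] := ltP x c.
  by rewrite max_r ?mul0r ?mulr_ge0 ?exponential_tail_pdf_ge0 //; lra.
rewrite max_l ?subr_ge0 // /exponential_tail_pdf patchE ifT; last first.
  by rewrite inE /= in_itv /= cx.
rewrite exponential_pdfE ?(le_trans c0) // /exp_density.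
set y := (x - c) / lam.
have -> : - x / lam = - (2 * lam)^-1 * (c + x) - y / 2 by rewrite /y; field; lra.
rewrite expRD; set E := expR (- (2 * lam)^-1 * (c + x)).
have -> : (x - c) * (E * expR (- (y / 2)) / lam) = y * expR (- (y / 2)) * E.
  by rewrite /y; field; lra.
have -> : 4 * lam * expR (- (2 * lam)^-1 * c)
    * ((2 * lam)^-1 * expR (- (2 * lam)^-1 * x)) = 2 * E.
  by rewrite /E mulrDr expRD; field; lra.
by rewrite ler_wpM2r ?expR_ge0 ?mul_expRNhalf_le2.
Qed.

End exponential_tail.

Section excess_expectation.
Context {R : realType} {lam1 lam2 c K0 K1 : R}.
Notation mu := (@lebesgue_measure R).
Hypotheses (lam1_gt0 : 0 < lam1) (lam2_gt0 : 0 < lam2) (c_ge0 : 0 <= c)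
  (K0_ge0 : 0 <= K0) (K1_ge0 : 0 <= K1).

Let phi (lam : R) := exponential_pdf lam^-1.
Let psi (lam : R) := exponential_tail_pdf (2 * lam)^-1 c.
Let w (lam : R) := K1 * (4 * lam * expR (- (2 * lam)^-1 * c)).
Let g1 (z : R * R) := K0 * phi lam1 z.1 * phi lam2 z.2.
Let g2 (z : R * R) := w lam1 * psi lam1 z.1 * phi lam2 z.2.
Let g3 (z : R * R) := w lam2 * phi lam1 z.1 * psi lam2 z.2.

Let phi_ge0 {lam} (x : R) : 0 < lam -> 0 <= phi lam x.
Proof. by move=> ?; apply: exponential_pdf_ge0; rewrite invr_ge0 ltW. Qed.

Let psi_ge0 {lam} (x : R) : 0 < lam -> 0 <= psi lam x.
Proof.
by move=> ?; apply: exponential_tail_pdf_ge0; rewrite invr_ge0 mulr_ge0 // ltW.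
Qed.

Let w_ge0 {lam : R} : 0 < lam -> 0 <= w lam.
Proof. by move=> ?; rewrite mulr_ge0 // mulr_ge0 ?expR_ge0 // mulr_ge0 // ltW. Qed.

Let g1_ge0 z : 0 <= g1 z.
Proof.
exact: mulr_ge0 (mulr_ge0 K0_ge0 (phi_ge0 z.1 lam1_gt0)) (phi_ge0 z.2 lam2_gt0).
Qed.

Let g2_ge0 z : 0 <= g2 z.
Proof.
exact: mulr_ge0 (mulr_ge0 (w_ge0 lam1_gt0) (psi_ge0 z.1 lam1_gt0))
  (phi_ge0 z.2 lam2_gt0).
Qed.

Let g3_ge0 z : 0 <= g3 z.
Proof.
exact: mulr_ge0 (mulr_ge0 (w_ge0 lam2_gt0) (phi_ge0 z.1 lam1_gt0))
  (psi_ge0 z.2 lam2_gt0).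
Qed.

Lemma excess_density_le_majorant (f : R -> R -> R) (x y : R) : 0 < x -> 0 < y ->
  f x y <= K0 + K1 * (Num.max (x - c) 0 + Num.max (y - c) 0) ->
  f x y * exp_density lam1 x * exp_density lam2 y <= g1 (x, y) + g2 (x, y) + g3 (x, y).
Proof.
move=> x0 y0 fle.
have ex := excess_exp_density_le lam1 c x lam1_gt0 c_ge0.
have ey := excess_exp_density_le lam2 c y lam2_gt0 c_ge0.
rewrite (exp_densityE lam1 x lam1_gt0 (ltW x0)) in ex *.
rewrite (exp_densityE lam2 y lam2_gt0 (ltW y0)) in ey *.
have d10 := phi_ge0 x lam1_gt0; have d20 := phi_ge0 y lam2_gt0.
rewrite /g1 /g2 /g3 /w /phi /psi /= in d10 d20 *.
set px := Num.max (x - c) 0 in ex fle *; set py := Num.max (y - c) 0 in ey fle *.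
set d1 := exponential_pdf lam1^-1 x in ex d10 *.
set d2 := exponential_pdf lam2^-1 y in ey d20 *.
apply: le_trans (_ : (K0 + K1 * (px + py)) * d1 * d2 <= _).
  by rewrite ler_wpM2r // ler_wpM2r.
have -> : (K0 + K1 * (px + py)) * d1 * d2
    = K0 * d1 * d2 + K1 * (px * d1) * d2 + K1 * d1 * (py * d2) by ring.
apply: lerD; first apply: lerD => //.
  by have := ler_wpM2r d20 (ler_wpM2l K1_ge0 ex); lra.
by have := ler_wpM2l (mulr_ge0 K1_ge0 d10) ey; lra.
Qed.

Lemma integral_majorant :
  (\int[mu \x mu]_z (g1 z + g2 z + g3 z)%:E
    = (K0 + K1 * (4 * lam1 * expR (- c / lam1) + 4 * lam2 * expR (- c / lam2)))%:E)%E.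
Proof.
have mphi (lam : R) : measurable_fun setT (phi lam) := measurable_exponential_pdf _.
have mpsi (lam : R) : measurable_fun setT (psi lam).
  exact: measurable_exponential_tail_pdf.
have iphi (lam : R) : 0 < lam -> (\int[mu]_x (phi lam x)%:E = 1%:E)%E.
  by move=> ?; apply: integral_exponential_pdf; rewrite invr_gt0.
have ipsi (lam : R) : 0 < lam ->
    (\int[mu]_x (psi lam x)%:E = (expR (- (2 * lam)^-1 * c))%:E)%E.
  by move=> ?; apply: integral_exponential_tail_pdf => //; rewrite invr_gt0 mulr_gt0.
have mg1 : measurable_fun setT (EFin \o g1).
  by apply/measurable_EFinP; exact: measurable_tensor.
have mg2 : measurable_fun setT (EFin \o g2).
  by apply/measurable_EFinP; exact: measurable_tensor.
have mg3 : measurable_fun setT (EFin \o g3).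
  by apply/measurable_EFinP; exact: measurable_tensor.
under eq_integral do rewrite !EFinD.
rewrite ge0_integralD //=; last 3 first.
- by move=> z _; rewrite -EFinD lee_fin addr_ge0.
- by apply/measurable_EFinP/measurable_funD; apply/measurable_EFinP.
- by move=> z _; rewrite lee_fin.
rewrite ge0_integralD //=; last 2 first.
- by move=> z _; rewrite lee_fin.
- by move=> z _; rewrite lee_fin.
have p1 := phi_ge0^~ lam1_gt0; have p2 := phi_ge0^~ lam2_gt0.
have s1 := psi_ge0^~ lam1_gt0; have s2 := psi_ge0^~ lam2_gt0.
rewrite (integral_tensor mu mu (mphi lam1) (mphi lam2) p1 p2 K0_ge0
  (iphi _ lam1_gt0) (iphi _ lam2_gt0)).
rewrite (integral_tensor mu mu (mpsi lam1) (mphi lam2) s1 p2 (w_ge0 lam1_gt0)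
  (ipsi _ lam1_gt0) (iphi _ lam2_gt0)).
rewrite (integral_tensor mu mu (mphi lam1) (mpsi lam2) p1 s2 (w_ge0 lam2_gt0)
  (iphi _ lam1_gt0) (ipsi _ lam2_gt0)).
have sq (lam : R) : 0 < lam ->
    expR (- (2 * lam)^-1 * c) * expR (- (2 * lam)^-1 * c) = expR (- c / lam).
  by move=> ?; rewrite -expRD; congr expR; field; lra.
by rewrite -!EFinD /w -(sq _ lam1_gt0) -(sq _ lam2_gt0); congr EFin; ring.
Qed.

Lemma expectation_le_excess {f : R -> R -> R} :
  (forall x y, 0 < x -> 0 < y ->
     f x y <= K0 + K1 * (Num.max (x - c) 0 + Num.max (y - c) 0)) ->
  (\int[mu \x mu]_(z in [set z : R * R | (0 < z.1)%R /\ (0 < z.2)%R])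
      (f z.1 z.2 * exp_density lam1 z.1 * exp_density lam2 z.2)%:E
    <= (K0 + K1 * (4 * lam1 * expR (- c / lam1) + 4 * lam2 * expR (- c / lam2)))%:E)%E.
Proof.
move=> fle; rewrite -integral_majorant integral_mkcond.
have G0 z : 0 <= g1 z + g2 z + g3 z by rewrite !addr_ge0.
apply: le_integral_ge0_majorant => [z _ | [x y] _]; first by rewrite lee_fin.
rewrite patchE; case: ifPn => [/set_mem [/= x0 y0] | _].
  by rewrite lee_fin; apply: excess_density_le_majorant => //; exact: fle.
by have : ((0 : R)%:E <= (g1 (x, y) + g2 (x, y) + g3 (x, y))%:E)%E by rewrite lee_fin.
Qed.

End excess_expectation.


Theorem lemma2 (R : realType) (lam1 lam2 : R) :
  0 < lam2 -> lam2 <= lam1 ->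
  exists C0 : R, 0 < C0 /\
    forall (P Delta : R) (T : nat), 0 < P -> 0 < Delta ->
      (expected_rloss lam1 lam2 P Delta T <=
       (log2 (1 + C0 * P * Num.max (expR (- (T%:R * Delta) / lam1)) Delta))%:E)%E.
Proof.
move=> l20 l21; have l10 := lt_le_trans l20 l21.
exists (2 + 8 * lam1); split => [|P Delta T P0 D0]; first lra.
set c := T%:R * Delta; set m := Num.max _ Delta; set a := _ * P * m.
have c0 : 0 <= c by rewrite mulr_ge0 // ltW.
have a0 : 0 <= a by rewrite /a !mulr_ge0 ?(ltW P0) ?le_max ?expR_ge0 //; lra.
have beta0 : 0 <= ((1 + a) * ln 2)^-1.
  by rewrite invr_ge0 mulr_ge0 ?ln_ge0 ?ler1n //; lra.
set beta := ((1 + a) * ln 2)^-1 in beta0.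
(* [K0 + P beta (x + y)] is the tangent of [log2 (1 + P (2 Delta + x + y))] at [a]. *)
set K0 := log2 (1 + a) - (a - 2 * Delta * P) * beta.
have K00 : 0 <= K0.
  have := log2_1D_tangent a 0 a0 (lexx 0); rewrite addr0 [log2 1]/log2 ln1 mul0r -/beta.
  by have := mulr_ge0 (mulr_ge0 (ltW D0) (ltW P0)) beta0; rewrite /K0; lra.
have loss x y : 0 < x -> 0 < y ->
    rloss P Delta T x y <= K0 + P * beta * (Num.max (x - c) 0 + Num.max (y - c) 0).
  move=> x0 y0; have := rloss_le_tangent P Delta T a x y P0 D0 a0 x0 y0.
  by rewrite -/beta /K0; lra.
apply: le_trans (expectation_le_excess l10 l20 c0 K00 (mulr_ge0 (ltW P0) beta0) loss) _.
have := mean_quantization_error_le lam1 lam2 c Delta l20 l21 c0.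
move/(ler_wpM2l (mulr_ge0 (ltW P0) beta0)).
by rewrite lee_fin /K0 -/m /a; lra.
Qed.
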